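(* Suppose $(G_n\in\Delta^{n\times n})$ and $E\in\mathbb R_{\ge0}^{\mathbb N\times\mathbb N}$ satisfy $\lim_n\|\pi_nG_n-E\|_1=0$ for some permutations $\pi_n$ of $[n]$ (with $G_n$ zero-padded to an infinite array). Then $(G_n)$ quotient-converges to the grapheur $\mathsf M=\sum_{i,j}E_{i,j}\delta_{(T_i,T_j)}$, where $T_i$ are iid uniform on $[0,1]$.
   Context: $\Delta^{n\times n}$: $n\times n$ matrices with nonnegative entries summing to $1$. $(\pi G)_{i,j}=G_{\pi^{-1}(i),\pi^{-1}(j)}$; $\|\cdot\|_1$ is the entrywise $\ell_1$ norm. For $f:[n]\to[k]$, $(\rho(f)G)_{i,j}=\sum_{v\in f^{-1}(i),u\in f^{-1}(j)}G_{v,u}$; $F_{k,n}$ is a uniformly random map $[n]\to[k]$. For a random probability measure $\mathsf M$ on $[0,1]^2$, $\mathsf G_k[\mathsf M]$ is the random $k\times k$ matrix with entries $\mathsf M(I_i^{(k)}\times I_j^{(k)})$, $I_i^{(k)}=[(i-1)/k,i/k)$. $(G_n)$ quotient-converges to $\mathsf M$ if $\rho(F_{k,n})G_n\to\mathsf G_k[\mathsf M]$ in distribution for every $k$. *)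

From HB Require Import structures.
From mathcomp Require Import all_boot all_order all_algebra all_fingroup finmap.
From mathcomp Require Import all_classical all_reals all_analysis.
Set Implicit Arguments. Unset Strict Implicit. Unset Printing Implicit Defensive.
Import Order.TTheory GRing.Theory Num.Theory.
Import numFieldNormedType.Exports.
Local Open Scope classical_set_scope.
Local Open Scope ring_scope.

Section Defs.
Variable R : realType.

Definition in_Delta n (G : 'M[R]_n) : Prop :=
  (forall i j, 0 <= G i j) /\ \sum_(i < n) \sum_(j < n) G i j = 1.

Definition perm_act n (pi : {perm 'I_n}) (G : 'M[R]_n) : 'M[R]_n :=
  \matrix_(i, j) G (pi^-1 i)%g (pi^-1 j)%g.

Definition zeropad n (G : 'M[R]_n) (i j : nat) : R :=
  match (insub i : option 'I_n), (insub j : option 'I_n) with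
  | Some i', Some j' => G i' j'
  | _, _ => 0
  end.

Definition l1dist n (G : 'M[R]_n) (E : nat -> nat -> R) : \bar R :=
  (\esum_(p in [set: nat * nat]) (`|zeropad G p.1 p.2 - E p.1 p.2|)%:E)%E.

Definition rho n k (f : {ffun 'I_n -> 'I_k}) (G : 'M[R]_n) : 'M[R]_k :=
  \matrix_(i, j) \sum_(v | f v == i) \sum_(u | f u == j) G v u.

(* I_i^{(k)} = [(i-1)/k, i/k), here with 0-based index i : 'I_k *)
Definition Ik k (i : 'I_k) : set R :=
  `[ (i%:R / k%:R), ((i.+1)%:R / k%:R) [%classic.

Section Random.
Context d (Omega : measurableType d) (P : probability Omega R).

Definition Gk (M : Omega -> set (R * R) -> \bar R) k (w : Omega) : 'M[R]_k :=
  \matrix_(i, j) fine (M w (Ik i `*` Ik j)).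

Definition grapheur (E : nat -> nat -> R) (T : nat -> Omega -> R)
  (w : Omega) (A : set (R * R)) : \bar R :=
  (\esum_(p in [set: nat * nat])
     (E p.1 p.2)%:E * (\1_A (T p.1 w, T p.2 w))%:E)%E.

Definition uniform01 (X : Omega -> R) : Prop :=
  measurable_fun setT X /\
  forall A : set R, measurable A ->
    P (X @^-1` A) = lebesgue_measure (A `&` `[0%R, 1%R]%classic).

Definition mutually_independent (T : nat -> Omega -> R) : Prop :=
  forall (S : {fset nat}) (A : nat -> set R), (forall a, measurable (A a)) ->
    P (\bigcap_(a in [set` S]) (T a @^-1` A a)) =
    (\prod_(a <- S) P (T a @^-1` A a))%E.

Definition iid_uniform01 (T : nat -> Omega -> R) : Prop :=
  (forall a, uniform01 (T a)) /\ mutually_independent T.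

(* quotient convergence of (G_n) to the random measure M: for every k >= 1,
   rho(F_{k,n}) G_n -> G_k[M] in distribution, i.e. E[h(...)] converges for
   every bounded continuous h on k x k real matrices; F_{k,n} is uniform on
   the maps [n] -> [k]. *)
Definition quotient_converges (G : forall n, 'M[R]_n)
  (M : Omega -> set (R * R) -> \bar R) : Prop :=
  forall k : nat, (0 < k)%N ->
  forall h : 'M[R]_k -> R, continuous h -> (exists C : R, forall x, `|h x| <= C) ->
    (fun n => ((#|{ffun 'I_n -> 'I_k}|%:R)^-1 *
               \sum_(f : {ffun 'I_n -> 'I_k}) h (rho f (G n)))%:E)
      @ \oo --> (\int[P]_w (h (Gk M k w))%:E)%E.

End Random.
End Defs.

From HB Require Import structures.
From mathcomp Require Import all_boot all_order all_algebra all_fingroup finmap.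
From mathcomp Require Import all_classical all_reals all_analysis.
From mathcomp Require Import lra measurable_realfun.
Import Order.TTheory GRing.Theory Num.Theory.
Import numFieldNormedType.Exports.
Set Implicit Arguments. Unset Strict Implicit. Unset Printing Implicit Defensive.
Local Open Scope classical_set_scope.
Local Open Scope ring_scope.

(* Realise F_{k,n} through the samples: colour vertex v by the cell I_i^{(k)}
   containing T_v.  By independence and uniformity of the T_v this colouring
   is almost surely a uniform map [n] -> [k], and relabelling by pi_n does not
   change the law of rho(F) G_n, so the averages in question are expectations
   of h(rho(colouring)(pi_n G_n)).  For each sample, the (i,j) entry of that
   matrix is the sum of (pi_n G_n)_{v,u} over the pairs with (T_v, T_u) in
   I_i x I_j, and differs from the corresponding entry of G_k[M] by at most
   ||pi_n G_n - E||_1; so it converges pointwise, and bounded convergence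
   concludes. *)

Section ZeroPad.
Variable R : realType.

Lemma zeropad_ord n (M : 'M[R]_n) (v u : 'I_n) : zeropad M v u = M v u.
Proof. by rewrite /zeropad !valK. Qed.

Lemma zeropad_outside n (M : 'M[R]_n) a b :
  ~ ((a < n)%N /\ (b < n)%N) -> zeropad M a b = 0.
Proof.
rewrite /zeropad => ab_out; case: insubP => [v av _|//]; case: insubP => [u bu _|//].
by exfalso; apply: ab_out.
Qed.

Lemma zeropad_ge0 n (M : 'M[R]_n) a b :
  (forall v u, 0 <= M v u) -> 0 <= zeropad M a b.
Proof. by move=> M0; rewrite /zeropad; case: insubP => [v _ _|//]; case: insubP. Qed.

Lemma esum_zeropadM n (M : 'M[R]_n) (w : nat -> nat -> R) :
  (forall v u, 0 <= M v u) -> (forall a b, 0 <= w a b) ->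
  (\esum_(p in [set: nat * nat]) (zeropad M p.1 p.2 * w p.1 p.2)%:E)%E
  = (\sum_(v < n) \sum_(u < n) M v u * w v u)%:E.
Proof.
move=> M0 w0.
have -> : (\esum_(p in [set: nat * nat]) (zeropad M p.1 p.2 * w p.1 p.2)%:E)%E
    = (\esum_(p in `I_n `*` `I_n) (zeropad M p.1 p.2 * w p.1 p.2)%:E)%E.
  rewrite [RHS]esum_mkcond; apply: eq_esum => -[a b] _.
  case: ifPn => // /negP; rewrite inE /= => ab_out.
  by rewrite zeropad_outside ?mul0r // => -[? ?]; apply: ab_out.
rewrite esum_fset; last 2 first.
- by apply: finite_setX; apply: finite_II.
- by move=> [a b] _; rewrite lee_fin mulr_ge0 ?zeropad_ge0.
rewrite -(@pair_fsbig _ _ _ _ _ _ _ (fun a b => (zeropad M a b * w a b)%:E));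
  try exact: finite_II.
rewrite -sumEFin -fsbig_ord; apply: eq_bigr => v _.
by rewrite -fsbig_ord -sumEFin; apply: eq_bigr => u _; rewrite zeropad_ord.
Qed.

End ZeroPad.

Section WeightedEsum.
Variables (R : realType) (I : choiceType) (w : I -> R).
Hypothesis w01 : forall p, 0 <= w p <= 1.
Local Open Scope ereal_scope.

Lemma esum_weighted_le_add_dist (A B : I -> R) :
  (forall p, (0 <= A p)%R) -> (forall p, (0 <= B p)%R) ->
  \esum_(p in [set: I]) (B p * w p)%:E <=
  \esum_(p in [set: I]) (A p * w p)%:E + \esum_(p in [set: I]) (`|A p - B p|)%:E.
Proof.
move=> A0 B0; rewrite -esumD; last 2 first.
- by move=> p _; rewrite lee_fin; case/andP: (w01 p) => ? _; rewrite mulr_ge0.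
- by move=> p _; rewrite lee_fin.
apply: le_esum => p _; rewrite -EFinD lee_fin.
case/andP: (w01 p) => w0 w1.
have : (B p * w p - A p * w p <= `|A p - B p|)%R.
  rewrite -mulrBl (le_trans (ler_norm _))// normrM (ger0_norm w0).
  by rewrite distrC -[X in (_ <= X)%R]mulr1 ler_wpM2l.
lra.
Qed.

Lemma esum_weighted_dist_le (A B : I -> R) (y D : R) :
  (forall p, (0 <= A p)%R) -> (forall p, (0 <= B p)%R) ->
  \esum_(p in [set: I]) (A p * w p)%:E = y%:E ->
  \esum_(p in [set: I]) (`|A p - B p|)%:E = D%:E ->
  (`| fine (\esum_(p in [set: I]) (B p * w p)%:E) - y | <= D)%R.
Proof.
move=> A0 B0 Ay AD.
have BA := esum_weighted_le_add_dist A0 B0.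
have AB := esum_weighted_le_add_dist B0 A0.
rewrite Ay AD -EFinD in BA.
have B_fin : \esum_(p in [set: I]) (B p * w p)%:E \is a fin_num.
  rewrite ge0_fin_numE; first by apply: (le_lt_trans BA); rewrite ltry.
  by apply: esum_ge0 => p _; rewrite lee_fin; case/andP: (w01 p) => ? _; rewrite mulr_ge0.
have AD' : \esum_(p in [set: I]) (`|B p - A p|)%:E = D%:E.
  by rewrite -AD; apply: eq_esum => p _; rewrite distrC.
move: BA AB; rewrite -(fineK B_fin) Ay AD' -EFinD !lee_fin => BA AB.
by rewrite ler_norml; apply/andP; split; lra.
Qed.

End WeightedEsum.

Lemma cvg_mx_entrywise (R : realType) (m n : nat) (A : nat -> 'M[R]_(m, n))
    (B : 'M[R]_(m, n)) (e : nat -> R) :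
  e @ \oo --> 0 ->
  (\forall N \near \oo, forall i j, `|A N i j - B i j| <= e N) -> A @ \oo --> B.
Proof.
move=> e0 AB; apply/cvgrPdist_le => eps eps0.
have e_small : \forall N \near \oo, `|0 - e N| <= eps by move/cvgrPdist_le: e0; apply.
apply: (filterS2 _ _ AB e_small) => N ABN eN.
rewrite (_ : `|B - A N| = mx_norm (B - A N)) // mx_normrE.
apply: bigmax_le; first exact: ltW.
move=> ij _; rewrite !mxE distrC (le_trans (ABN _ _))//.
by rewrite (le_trans _ eN)// sub0r normrN ler_norm.
Qed.

Section Cells.
Variables (R : realType) (k : nat).
Hypothesis k_gt0 : (0 < k)%N.

Let k_gt0R : 0 < k%:R :> R. Proof. by rewrite ltr0n. Qed.

Lemma IkP (i : 'I_k) (x : R) : Ik i x <-> i%:R <= x * k%:R < i.+1%:R.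
Proof. by rewrite /Ik /= in_itv /= ler_pdivrMr // ltr_pdivlMr. Qed.

Lemma Ik_disj (i j : 'I_k) (x : R) : Ik i x -> Ik j x -> i = j.
Proof.
move=> /IkP /andP[ix xi] /IkP /andP[jx xj]; apply/val_inj/eqP.
have ij : (i < j.+1)%N by rewrite -(ltr_nat R) (le_lt_trans ix xj).
have ji : (j < i.+1)%N by rewrite -(ltr_nat R) (le_lt_trans jx xi).
by rewrite eqn_leq -ltnS ij -ltnS ji.
Qed.

Lemma Ik_sub (i : 'I_k) : (Ik i : set R) `<=` `[0, 1[%classic.
Proof.
move=> x /IkP /andP[ix xi]; rewrite /= in_itv /=; apply/andP; split.
  by rewrite -(pmulr_lge0 _ k_gt0R) (le_trans _ ix).
by rewrite -(ltr_pM2r k_gt0R) mul1r (lt_le_trans xi)// ler_nat.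
Qed.

Lemma Ik_cover (x : R) : `[0, 1[%classic x -> exists i : 'I_k, Ik i x.
Proof.
rewrite /= in_itv /= => /andP[x0 x1].
have xk0 : 0 <= x * k%:R by rewrite mulr_ge0.
have ik : (Num.truncn (x * k%:R) < k)%N.
  by rewrite truncn_lt_nat // -[X in _ < X]mul1r ltr_pM2r.
by exists (Ordinal ik); apply/IkP; exact: truncn_itv.
Qed.

Lemma lebesgue_Ik (i : 'I_k) : lebesgue_measure (Ik i : set R) = (k%:R^-1)%:E.
Proof.
rewrite /Ik lebesgue_measure_itv /= lte_fin ltr_pM2r ?invr_gt0 // ltr_nat ltnSn.
by rewrite -EFinB -mulrBl -natrB ?leqnSn // subSnn mul1r.
Qed.

(* [None] exactly off [0, 1[, a null event for uniform samples. *)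
Definition cell (x : R) : option 'I_k := [pick i : 'I_k | `[< Ik i x >] ].

Definition cell_set (o : option 'I_k) : set R :=
  if o is Some i then Ik i else ~` `[0, 1[%classic.

Lemma cellP (x : R) o : cell x = o <-> cell_set o x.
Proof.
rewrite /cell; case: pickP => [j /asboolP xj|noIk]; case: o => [i|] /=.
- by split => [[<-]//|xi]; congr Some; exact: Ik_disj xj xi.
- by split => // /(_ (Ik_sub xj)).
- by split => // xi; move: (noIk i) => /asboolP.
- split => // _ /Ik_cover[i xi].
  by move: (noIk i) => /asboolP.
Qed.

Lemma cell_eqSome (x : R) (i : 'I_k) : (cell x == Some i) = (x \in Ik i).
Proof.
apply/eqP/idP => [/cellP xi | /set_mem xi]; first exact: mem_set.
exact/(cellP x (Some i)).
Qed.

Lemma measurable_cell_set o : measurable (cell_set o).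
Proof. by case: o => [i|] /=; [exact: measurable_itv | apply: measurableC]. Qed.

End Cells.

Section Relabelling.
Variables (R : realType) (k : nat).

Lemma rho_perm_act n (p : {perm 'I_n}) (M : 'M[R]_n) (f : {ffun 'I_n -> 'I_k}) :
  rho f (perm_act p M) = rho [ffun v => f (p v)] M.
Proof.
apply/matrixP => i j; rewrite !mxE.
rewrite (reindex_inj (@perm_inj _ p)) /=; apply: eq_big => v; first by rewrite ffunE.
move=> _; rewrite (reindex_inj (@perm_inj _ p)) /=; apply: eq_big => u; first by rewrite ffunE.
by move=> _; rewrite mxE !permK.
Qed.

Lemma sum_rho_perm_act n (p : {perm 'I_n}) (M : 'M[R]_n) (h : 'M[R]_k -> R) :
  \sum_(f : {ffun 'I_n -> 'I_k}) h (rho f (perm_act p M)) =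
  \sum_(f : {ffun 'I_n -> 'I_k}) h (rho f M).
Proof.
rewrite [RHS](reindex (fun f : {ffun 'I_n -> 'I_k} => [ffun v => f (p v)])) /=.
  by apply: eq_bigr => f _; rewrite rho_perm_act.
exists (fun f : {ffun 'I_n -> 'I_k} => [ffun v => f ((p^-1)%g v)]) => f _;
  by apply/ffunP => v; rewrite !ffunE ?permKV ?permK.
Qed.

End Relabelling.

Section PartialColorings.
Variables (R : realType) (K : nat).
Local Notation k := K.+1.

Definition rho_opt n (c : {ffun 'I_n -> option 'I_k}) (M : 'M[R]_n) : 'M[R]_k :=
  \matrix_(i, j) \sum_(v < n) \sum_(u < n)
    M v u * ((c v == Some i) && (c u == Some j))%:R.

Lemma rho_opt_Some n (f : {ffun 'I_n -> 'I_k}) (M : 'M[R]_n) :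
  rho_opt [ffun v => Some (f v)] M = rho f M.
Proof.
apply/matrixP => i j; rewrite !mxE.
rewrite [RHS]big_mkcond; apply: eq_bigr => v _; rewrite ffunE (inj_eq Some_inj).
case: (f v == i) => /=; last by rewrite big1 // => u _; rewrite mulr0.
rewrite [RHS]big_mkcond; apply: eq_bigr => u _; rewrite ffunE (inj_eq Some_inj).
by case: (f u == j); rewrite ?mulr1 ?mulr0.
Qed.

Definition cell_weight (o : option 'I_k) : R := if o is Some _ then k%:R^-1 else 0.

Lemma sum_rho_opt_cell_weight n (M : 'M[R]_n) (h : 'M[R]_k -> R) :
  \sum_(c : {ffun 'I_n -> option 'I_k}) h (rho_opt c M) * \prod_(v < n) cell_weight (c v)
  = k%:R^-1 ^+ n * \sum_(f : {ffun 'I_n -> 'I_k}) h (rho f M).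
Proof.
rewrite (bigID (fun c : {ffun 'I_n -> option 'I_k} => [forall v, c v != None])) /=.
rewrite [X in _ + X]big1 ?addr0; last first.
  move=> c /forallPn [v]; rewrite negbK => /eqP cv.
  by rewrite (bigD1 v) //= cv mul0r mulr0.
rewrite (reindex_onto (fun f : {ffun 'I_n -> 'I_k} => [ffun v => Some (f v)])
                      (fun c => [ffun v => odflt ord0 (c v)])); last first.
  move=> c /forallP c_total; apply/ffunP => v; rewrite !ffunE.
  by move: (c_total v); case: (c v).
rewrite (eq_bigl xpredT); last first.
  move=> f; apply/andP; split; first by apply/forallP => v; rewrite ffunE.
  by apply/eqP/ffunP => v; rewrite !ffunE.
rewrite mulr_sumr; apply: eq_bigr => f _.
rewrite rho_opt_Some (eq_bigr (fun _ => k%:R^-1)); last by move=> v _; rewrite ffunE.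
by rewrite prodr_const card_ord mulrC.
Qed.

End PartialColorings.

Section RandomColoring.
Variables (R : realType) (d : measure_display) (Omega : measurableType d)
  (P : probability Omega R) (T : nat -> Omega -> R).
Variable K : nat.
Local Notation k := K.+1.

Definition coloring n (w : Omega) : {ffun 'I_n -> option 'I_k} :=
  [ffun v : 'I_n => cell k (T v w)].

Definition coloring_event n (c : {ffun 'I_n -> option 'I_k}) : set Omega :=
  \bigcap_(v in [set: 'I_n]) T v @^-1` (cell_set (c v) : set R).

Lemma coloringP n c w : coloring n w = c <-> coloring_event c w.
Proof.
split => [<- v _|wc]; first by rewrite /= ffunE; apply/(cellP (ltn0Sn K)).
by apply/ffunP => v; rewrite ffunE; apply/(cellP (ltn0Sn K)) => //; apply: wc.
Qed.

Lemma rho_opt_coloring_decomp n (M : 'M[R]_n) (h : 'M[R]_k -> R) w :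
  h (rho_opt (coloring n w) M) =
  \sum_c h (rho_opt c M) * \1_(coloring_event c) w.
Proof.
rewrite (bigD1 (coloring n w)) //= big1 ?addr0.
  by rewrite indicE mem_set ?mulr1 //; apply/coloringP.
move=> c c_ne; rewrite indicE memNset ?mulr0 // => /coloringP wc.
by rewrite wc eqxx in c_ne.
Qed.

Lemma rho_opt_coloring_entry n (M : 'M[R]_n) w i j :
  rho_opt (coloring n w) M i j =
  \sum_(v < n) \sum_(u < n) M v u * \1_(Ik i `*` Ik j) (T v w, T u w).
Proof.
rewrite mxE; apply: eq_bigr => v _; apply: eq_bigr => u _.
rewrite indicE in_setX /= !ffunE.
by rewrite !cell_eqSome.
Qed.

Lemma Gk_grapheur_entry (E : nat -> nat -> R) w i j :
  Gk (grapheur E T) k w i j =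
  fine (\esum_(p in [set: nat * nat])
          (E p.1 p.2 * \1_(Ik i `*` Ik j) (T p.1 w, T p.2 w))%:E)%E.
Proof. by rewrite mxE; congr fine; apply: eq_esum => p _; rewrite EFinM. Qed.

Lemma cvg_rho_opt_coloring (E : nat -> nat -> R) (M : forall n, 'M[R]_n) w :
  (forall n v u, 0 <= M n v u) -> (forall a b, 0 <= E a b) ->
  (fun n => l1dist (M n) E) @ \oo --> 0%E ->
  (fun n => rho_opt (coloring n w) (M n)) @ \oo --> Gk (grapheur E T) k w.
Proof.
move=> M0 E0 /fine_cvgP [dist_fin dist0].
apply: (cvg_mx_entrywise dist0); move: dist_fin; apply: filterS => n dist_fin i j.
rewrite Gk_grapheur_entry distrC.
pose ind (p : nat * nat) : R := \1_(Ik i `*` Ik j) (T p.1 w, T p.2 w).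
apply: (@esum_weighted_dist_le R _ ind _ (fun p => zeropad (M n) p.1 p.2)).
- by move=> p; rewrite /ind indicE; case: (_ \in _); rewrite ?ler01 ?lexx.
- by move=> p; exact: zeropad_ge0.
- by move=> p; exact: E0.
- rewrite (@esum_zeropadM R n (M n) (fun a b => \1_(Ik i `*` Ik j) (T a w, T b w))) //.
  by rewrite rho_opt_coloring_entry.
- by rewrite fineK.
Qed.

Hypothesis T_iid : iid_uniform01 P T.

Lemma measurable_preimage_T a (B : set R) : measurable B -> measurable (T a @^-1` B).
Proof. by move=> mB; rewrite -[_ @^-1` _]setTI; apply: (T_iid.1 a).1. Qed.

Lemma prob_cell_set a (o : option 'I_k) : P (T a @^-1` cell_set o) = (cell_weight R o)%:E.
Proof.
have I01 : `[0, 1[%classic `<=` (`[0%R, 1%R]%classic : set R).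
  by move=> x; rewrite /= !in_itv /= => /andP[-> /ltW].
case: o => [i|] /=.
  rewrite (T_iid.1 a).2; last exact: measurable_itv.
  by rewrite setIidl ?lebesgue_Ik //; apply: subset_trans I01; exact: Ik_sub.
rewrite -preimage_setC probability_setC; last first.
  by apply: measurable_preimage_T; exact: measurable_itv.
rewrite (T_iid.1 a).2; last exact: measurable_itv.
by rewrite (setIidl I01) lebesgue_measure_itv /= lte01 oppr0 adde0 subee.
Qed.

Lemma measurable_coloring_event n c : measurable (@coloring_event n c).
Proof.
apply: fin_bigcap_measurable; first exact: finite_finset.
by move=> v _; apply: measurable_preimage_T; exact: measurable_cell_set.
Qed.

Lemma prob_coloring_event n c :
  P (@coloring_event n c) = (\prod_(v < n) cell_weight R (c v))%:E.
Proof.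
pose A (a : nat) : set R := if insub a is Some v then cell_set (c v) : set R else setT.
have mA a : measurable (A a).
  by rewrite /A; case: insubP => [v _ _|_]; [exact: measurable_cell_set | exact: measurableT].
have S_n a : (a \in seq_fset tt (iota 0 n)) = (a < n)%N by rewrite seq_fsetE mem_iota.
have := T_iid.2 (seq_fset tt (iota 0 n)) A mA.
have -> : \bigcap_(a in [set` seq_fset tt (iota 0 n)]) T a @^-1` A a = coloring_event c.
  apply/seteqP; split => w wA.
    move=> v _; have Sv : val v \in seq_fset tt (iota 0 n) by rewrite S_n ltn_ord.
    by have := wA (val v) Sv; rewrite /A valK.
  move=> a aS; have an : (a < n)%N by rewrite -S_n; exact: aS.
  rewrite /A; case: insubP => [u _ ua|]; last by rewrite an.
  have -> : u = Ordinal an by apply: val_inj.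
  exact: wA.
move=> ->; rewrite (perm_big _ (seq_fset_perm _ _)) undup_id ?iota_uniq //.
rewrite -[n in iota 0 n]subn0 -/(index_iota 0 n) big_mkord -prodEFin.
by apply: eq_bigr => v _; rewrite /A valK prob_cell_set.
Qed.

Lemma measurable_rho_opt_coloring n (M : 'M[R]_n) (h : 'M[R]_k -> R) :
  measurable_fun setT (fun w => h (rho_opt (coloring n w) M)).
Proof.
under eq_fun => w do rewrite rho_opt_coloring_decomp.
apply: measurable_sum => c; apply: measurable_funM; first exact: measurable_cst.
exact/measurable_indic/measurable_coloring_event.
Qed.

Lemma expectation_rho_opt_coloring n (M : 'M[R]_n) (h : 'M[R]_k -> R) :
  (\int[P]_w (h (rho_opt (coloring n w) M))%:E =
   (k%:R^-1 ^+ n * \sum_(f : {ffun 'I_n -> 'I_k}) h (rho f M))%:E)%E.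
Proof.
under eq_integral => w _ do
  rewrite rho_opt_coloring_decomp -sumEFin (eq_bigr _ (fun c _ => EFinM _ _)).
rewrite integral_sum //; last first.
  move=> c; apply: integrableZl => //.
  by apply: integrable_indic => //; exact: measurable_coloring_event.
rewrite -sum_rho_opt_cell_weight -sumEFin; apply: eq_bigr => c _.
rewrite integralZl //; last by apply: integrable_indic => //; exact: measurable_coloring_event.
rewrite integral_indic //; last exact: measurable_coloring_event.
by rewrite setIT EFinM -prob_coloring_event.
Qed.

End RandomColoring.

Lemma bounded_convergence (R : realType) (d : measure_display) (Omega : measurableType d)
    (mu : {finite_measure set Omega -> \bar R}) (f : nat -> Omega -> R) (g : Omega -> R) (C : R) :
  (forall n, measurable_fun setT (f n)) -> (forall n w, `|f n w| <= C) ->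
  (forall w, f ^~ w @ \oo --> g w) ->
  (fun n => \int[mu]_w (f n w)%:E)%E @ \oo --> (\int[mu]_w (g w)%:E)%E.
Proof.
move=> mf fC fg.
have mg : measurable_fun setT g by apply: measurable_fun_cvg mf _ => w _; exact: fg.
have f_g : \forall w \ae mu, setT w -> (fun n => (f n w)%:E) @ \oo --> (g w)%:E.
  by apply: aeW => w _; apply: cvg_EFin; [exact: nearW | exact: fg].
have f_C : \forall w \ae mu, forall n, setT w -> (`|(f n w)%:E| <= (cst C w)%:E)%E.
  by apply: aeW => w n _; rewrite abse_EFin lee_fin.
have [_ _] // := dominated_convergence measurableT
  (fun n => (measurable_EFinP _ _).2 (mf n)) ((measurable_EFinP _ _).2 mg) f_g
  (finite_measure_integrable_cst mu C measurableT) f_C.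
Qed.

Theorem mainTheorem9 (R : realType) (G : forall n : nat, 'M[R]_n)
  (E : nat -> nat -> R) (pi : forall n : nat, {perm 'I_n})
  (d : measure_display) (Omega : measurableType d) (P : probability Omega R)
  (T : nat -> Omega -> R) :
  (forall n, (0 < n)%N -> in_Delta (G n)) ->
  (forall i j, 0 <= E i j) ->
  (fun n => l1dist (perm_act (pi n) (G n)) E) @ \oo --> 0%E ->
  iid_uniform01 P T ->
  quotient_converges P G (grapheur E T).
Proof.
move=> G_Delta E0 G_E T_iid [//|K] _ h h_cont [C hC].
pose M n := perm_act (pi n) (G n).
have M0 n v u : 0 <= M n v u.
  by case: n v u => [[]//|n] v u; rewrite mxE; exact: (G_Delta n.+1 isT).1.
have -> : (fun n => ((#|{ffun 'I_n -> 'I_K.+1}|%:R)^-1 *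
             \sum_(f : {ffun 'I_n -> 'I_K.+1}) h (rho f (G n)))%:E) =
          (fun n => \int[P]_w (h (rho_opt (coloring T K n w) (M n)))%:E)%E.
  apply: funext => n; rewrite (expectation_rho_opt_coloring T_iid) sum_rho_perm_act.
  by rewrite card_ffun !card_ord natrX exprVn.
apply: (bounded_convergence (C := C)) => [n|n w|w].
- exact: (measurable_rho_opt_coloring T_iid).
- exact: hC.
- by apply: continuous_cvg; [exact: h_cont | exact: cvg_rho_opt_coloring].
Qed.
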